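(* For each $\tau>0$ let $t_\tau\in\mathbb R$ be arbitrary and set $\xi_\tau(s)=\big(\phi_\tau^2+\tau^2/\phi_\tau^2\big)(s-t_\tau)$. Then for every sequence $\tau_n\to0$ there is a subsequence along which $\xi_{\tau_n}$ converges uniformly on compact subsets of $\mathbb R$ either to the function $s\mapsto(\cosh(s-s_0))^{-2}$ for some $s_0\in\mathbb R$, or to $0$.
   Context: $\phi_\tau$ is the unique smooth, periodic, non-constant solution of $\dot\phi^2+(\phi^2-\tau)^2=\phi^2$ taking its minimum value at $s=0$. *)

From Stdlib Require Import Reals Lra.
Open Scope R_scope.

Definition smooth_with (f : R -> R) (D : nat -> R -> R) : Prop :=
  D 0%nat = f /\ forall (n : nat) (x : R), derivable_pt_lim (D n) x (D (S n) x).

(* phi is a smooth, periodic, non-constant solution of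
   phi'^2 + (phi^2 - tau)^2 = phi^2 taking its minimum value at s = 0.
   (The paper asserts this object is unique; we quantify over any such phi.) *)
Definition is_phi (tau : R) (phi : R -> R) : Prop :=
  exists D : nat -> R -> R,
    smooth_with phi D /\
    (forall s, (D 1%nat s)^2 + (phi s ^ 2 - tau)^2 = phi s ^ 2) /\
    (exists T, 0 < T /\ forall s, phi (s + T) = phi s) /\
    (exists a b, phi a <> phi b) /\
    (forall s, phi 0 <= phi s).

Definition xi (tau t : R) (phi : R -> R) (s : R) : R :=
  phi (s - t) ^ 2 + tau ^ 2 / phi (s - t) ^ 2.

Definition cv_unif_compact (g : nat -> R -> R) (h : R -> R) : Prop :=
  forall a b eps : R, 0 < eps ->
    exists N : nat, forall k : nat, (N <= k)%nat ->
      forall s, a <= s <= b -> Rabs (g k s - h s) < eps.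

(* Let X = phi^2 + tau^2/phi^2, so that xi_tau is a translate of X. The equation
   for phi turns into X'' = -6 X^2 + (4 + 8 tau) X + 8 tau^2, with the first
   integral X'^2 = 4 (1 + 2 tau - X) (X^2 - 4 tau^2) and 2 tau <= X <= 1 + 2 tau.
   For tau = 0 this is eta'' = 4 eta - 6 eta^2, solved by eta = sech^2.
   A Gronwall estimate on the energy of (X - eta, X' - eta') shows that around any
   point m where X reaches its maximum 1 + 2 tau, |X (s) - eta (s - m)| is at most
   5 tau e^(12 |s - m|). Conversely, the first integral forces X to reach its
   maximum within distance 2/d + 10 of any point where X >= d. Hence either the
   maxima of xi_(tau_n) stay bounded along a subsequence, and a convergent
   subsequence of them gives the limit sech^2 (s - s0), or they leave every
   compact set, and then xi_(tau_n) < d on any compact set for n large, giving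
   the limit 0. *)

From Stdlib Require Import Reals Lra Psatz Rtopology Classical ClassicalEpsilon.
Open Scope R_scope.

Notation dl := derivable_pt_lim.

Lemma dl_eq f x l l' : l = l' -> dl f x l -> dl f x l'.
Proof. now intros ->. Qed.

Lemma dl_plus f g x a b : dl f x a -> dl g x b -> dl (fun y => f y + g y) x (a + b).
Proof. apply (derivable_pt_lim_plus f g). Qed.

Lemma dl_minus f g x a b : dl f x a -> dl g x b -> dl (fun y => f y - g y) x (a - b).
Proof. apply (derivable_pt_lim_minus f g). Qed.

Lemma dl_mult f g x a b :
  dl f x a -> dl g x b -> dl (fun y => f y * g y) x (a * g x + f x * b).
Proof. apply (derivable_pt_lim_mult f g). Qed.

Lemma dl_opp f x a : dl f x a -> dl (fun y => - f y) x (- a).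
Proof. apply (derivable_pt_lim_opp f). Qed.

Lemma dl_const c x : dl (fun _ => c) x 0.
Proof. apply derivable_pt_lim_const. Qed.

Lemma dl_id x : dl (fun y => y) x 1.
Proof. apply derivable_pt_lim_id. Qed.

Lemma dl_comp f g x a b : dl f x a -> dl g (f x) b -> dl (fun y => g (f y)) x (b * a).
Proof. apply (derivable_pt_lim_comp f g). Qed.

Lemma dl_pow f x a n : dl f x a -> dl (fun y => f y ^ n) x (INR n * f x ^ pred n * a).
Proof. intros Hf; apply (dl_comp f (fun y => y ^ n)); [exact Hf | apply derivable_pt_lim_pow]. Qed.

Lemma dl_inv f x a : f x <> 0 -> dl f x a -> dl (fun y => / f y) x (- a / f x ^ 2).
Proof.
  intros Hfx Hf.
  assert (pr : derivable_pt f x) by (exists a; exact Hf).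
  apply (derive_pt_eq _ _ _ (derivable_pt_inv f x Hfx pr)).
  rewrite derive_pt_inv, (derive_pt_eq_0 f x a pr Hf).
  unfold Rsqr; field; exact Hfx.
Qed.

Lemma dl_div f g x a b : g x <> 0 -> dl f x a -> dl g x b ->
  dl (fun y => f y / g y) x ((a * g x - f x * b) / g x ^ 2).
Proof.
  intros Hgx Hf Hg.
  eapply dl_eq; [|apply dl_mult; [exact Hf | apply dl_inv; [exact Hgx | exact Hg]]].
  cbv beta; field; exact Hgx.
Qed.

Lemma dl_shift f c x a : dl f (x + c) a -> dl (fun y => f (y + c)) x a.
Proof.
  intros Hf.
  eapply dl_eq;
    [|apply (dl_comp (fun y => y + c) f); [apply dl_plus; [apply dl_id | apply dl_const]
                                          | exact Hf]].
  ring.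
Qed.

Lemma dl_reflect f x a : dl f (- x) a -> dl (fun y => f (- y)) x (- a).
Proof.
  intros Hf. eapply dl_eq; [|apply (dl_comp (fun y => - y) f); [apply dl_opp, dl_id | exact Hf]].
  ring.
Qed.

Lemma dl_continuity_pt f x l : dl f x l -> continuity_pt f x.
Proof. intros Hf; apply derivable_continuous_pt; exists l; exact Hf. Qed.

Lemma Rabs_le_between x B : Rabs x <= B -> - B <= x <= B.
Proof. unfold Rabs; destruct Rcase_abs; lra. Qed.

Lemma continuity_pt_eps f x : continuity_pt f x -> forall eps, 0 < eps ->
  exists d, 0 < d /\ forall y, Rabs (y - x) < d -> Rabs (f y - f x) < eps.
Proof.
  intros Hc eps Heps. destruct (Hc eps Heps) as [d [Hd Hy]]. exists d; split; [exact Hd|].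
  intros y Hyx. destruct (Req_dec y x) as [->|Hne].
  - rewrite Rminus_diag, Rabs_R0; exact Heps.
  - apply (Hy y); split; [split; [exact I | auto] | exact Hyx].
Qed.

Lemma continuity_pt_pos_nbhd f x : continuity_pt f x -> 0 < f x ->
  exists d, 0 < d /\ forall y, Rabs (y - x) < d -> 0 < f y.
Proof.
  intros Hc Hpos. destruct (continuity_pt_eps f x Hc (f x) Hpos) as [d [Hd Hy]].
  exists d; split; [exact Hd|]. intros y Hyx. specialize (Hy y Hyx). apply Rabs_def2 in Hy. lra.
Qed.

Lemma zero_near_of_mult_zero (f h : R -> R) x : (forall y, f y * h y = 0) ->
  continuity_pt h x -> h x <> 0 -> exists d, 0 < d /\ forall y, Rabs (y - x) < d -> f y = 0.
Proof.
  intros Hprod Hc Hne.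
  destruct (continuity_pt_pos_nbhd (fun y => h y * h x) x) as [d [Hd Hy]].
  - apply continuity_pt_mult; [exact Hc | apply continuity_pt_const; intros ? ?; reflexivity].
  - apply Rsqr_pos_lt; exact Hne.
  - exists d; split; [exact Hd|]. intros y Hyx.
    destruct (Rmult_integral _ _ (Hprod y)) as [H0|H0]; [exact H0|].
    specialize (Hy y Hyx). cbv beta in Hy. rewrite H0, Rmult_0_l in Hy. lra.
Qed.

Lemma continuity_pt_le_left f a x c : continuity_pt f x -> a < x ->
  (forall y, a < y < x -> f y <= c) -> f x <= c.
Proof.
  intros Hc Hax Hle. apply Rnot_lt_le; intro Hlt.
  destruct (continuity_pt_eps f x Hc (f x - c)) as [d [Hd Hy]]; [lra|].
  set (y := Rmax (a + (x - a) / 2) (x - d / 2)).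
  assert (Hy_in : a < y < x) by (unfold y, Rmax; destruct Rle_dec; lra).
  assert (Hyx : Rabs (y - x) < d) by (unfold y, Rmax; destruct Rle_dec; apply Rabs_def1; lra).
  specialize (Hy y Hyx). specialize (Hle y Hy_in). apply Rabs_def2 in Hy. lra.
Qed.

Lemma real_induction (P : R -> Prop) a :
  (forall x, a <= x -> (forall y, a <= y < x -> P y) ->
     exists d, 0 < d /\ forall y, a <= y < x + d -> P y) ->
  forall z, a <= z -> P z.
Proof.
  intros Hstep z Haz. apply NNPP; intro HPz.
  set (E := fun x => a <= x <= z /\ forall y, a <= y < x -> P y).
  destruct (completeness E) as [r [Hub Hlub]];
    [exists z; intros x [Hx _]; lra | exists a; split; [lra | intros y Hy; lra] |].
  assert (Har : a <= r) by (apply Hub; split; [lra | intros y Hy; lra]).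
  assert (Hbelow : forall y, a <= y < r -> P y).
  { intros y Hy. apply NNPP; intro HPy.
    assert (r <= y); [|lra].
    apply Hlub; intros x [Hx HPx]. apply Rnot_lt_le; intro Hyx. apply HPy, HPx; lra. }
  destruct (Hstep r Har Hbelow) as [d [Hd HP]].
  destruct (Rlt_or_le z (r + d)) as [Hz|Hz].
  - apply HPz, HP; lra.
  - assert (HE : E (r + d / 2)) by (split; [lra | intros y Hy; apply HP; lra]).
    specialize (Hub _ HE). lra.
Qed.

Lemma incr_of_dl_pos f f' a b : (forall x, dl f x (f' x)) ->
  (forall x, a < x < b -> 0 < f' x) -> a <= b -> f a <= f b.
Proof.
  intros Hf Hpos Hab. destruct (Req_dec a b) as [->|Hne]; [lra|].
  destruct (MVT_cor2 f f' a b ltac:(lra) (fun c _ => Hf c)) as [z [Hz Hzab]].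
  pose proof (Hpos z Hzab). nra.
Qed.

Lemma cosh_pos x : 0 < cosh x.
Proof. unfold cosh. pose proof (exp_pos x). pose proof (exp_pos (- x)). lra. Qed.

Lemma cosh_sqr_sub_sinh_sqr x : cosh x ^ 2 - sinh x ^ 2 = 1.
Proof.
  unfold cosh, sinh.
  assert (exp x * exp (- x) = 1) by (rewrite <- exp_plus, Rplus_opp_r; apply exp_0).
  nra.
Qed.

Lemma cosh_ge_1 x : 1 <= cosh x.
Proof. pose proof (cosh_pos x). pose proof (cosh_sqr_sub_sinh_sqr x). nra. Qed.

Lemma Rabs_sinh_le_cosh x : Rabs (sinh x) <= cosh x.
Proof.
  unfold cosh, sinh. pose proof (exp_pos x). pose proof (exp_pos (- x)).
  apply Rabs_le; lra.
Qed.

Definition sech2 (s : R) : R := / cosh s ^ 2.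
Definition sech2' (s : R) : R := -2 * sinh s / cosh s ^ 3.

(* Right-hand side of [X'' = force tau X]; [force 0] is that of [sech2]. *)
Definition force (tau x : R) : R := -6 * x ^ 2 + (4 + 8 * tau) * x + 8 * tau ^ 2.

Lemma sech2_derivative s : dl sech2 s (sech2' s).
Proof.
  unfold sech2, sech2'. pose proof (cosh_pos s).
  eapply dl_eq; [|apply dl_inv; [|apply dl_pow, derivable_pt_lim_cosh]].
  - simpl; field; lra.
  - apply pow_nonzero; lra.
Qed.

Lemma sech2'_derivative s : dl sech2' s (force 0 (sech2 s)).
Proof.
  unfold sech2, sech2', force. pose proof (cosh_pos s). pose proof (cosh_sqr_sub_sinh_sqr s).
  eapply dl_eq; [|apply dl_div; [| apply dl_mult; [apply dl_const | apply derivable_pt_lim_sinh]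
                                  | apply dl_pow, derivable_pt_lim_cosh]].
  - simpl. field_simplify_eq; [|lra]. replace (sinh s ^ 2) with (cosh s ^ 2 - 1) by lra. ring.
  - apply pow_nonzero; lra.
Qed.

Lemma sech2_0 : sech2 0 = 1.
Proof. unfold sech2. rewrite cosh_0. field. Qed.

Lemma sech2'_0 : sech2' 0 = 0.
Proof. unfold sech2'. rewrite sinh_0, cosh_0. field. Qed.

Lemma sech2_bounds s : 0 < sech2 s <= 1.
Proof.
  unfold sech2. pose proof (cosh_ge_1 s). assert (1 <= cosh s ^ 2) by nra. split.
  - apply Rinv_0_lt_compat; lra.
  - rewrite <- Rinv_1. apply Rinv_le_contravar; lra.
Qed.

Lemma Rabs_sech2'_le s : Rabs (sech2' s) <= 2.
Proof.
  unfold sech2'. pose proof (cosh_ge_1 s). pose proof (Rabs_sinh_le_cosh s).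
  assert (1 <= cosh s ^ 3) by (simpl; nra).
  unfold Rdiv. rewrite !Rabs_mult, Rabs_inv, (Rabs_pos_eq (cosh s ^ 3)) by lra.
  replace (Rabs (-2)) with 2 by (rewrite Rabs_left; lra).
  apply Rmult_le_reg_r with (cosh s ^ 3); [lra|].
  rewrite Rmult_assoc, Rinv_l by lra. nra.
Qed.

Lemma sech2_lipschitz x y : Rabs (sech2 x - sech2 y) <= 2 * Rabs (x - y).
Proof.
  assert (Hlt : forall u v, v < u -> Rabs (sech2 u - sech2 v) <= 2 * Rabs (u - v)).
  { intros u v Huv.
    destruct (MVT_cor2 sech2 sech2' v u Huv (fun c _ => sech2_derivative c)) as [c [Hc _]].
    rewrite Hc, Rabs_mult. apply Rmult_le_compat_r; [apply Rabs_pos | apply Rabs_sech2'_le]. }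
  destruct (Rtotal_order x y) as [Hxy|[->|Hxy]].
  - rewrite Rabs_minus_sym, (Rabs_minus_sym x). now apply Hlt.
  - rewrite !Rminus_diag, Rabs_R0. lra.
  - now apply Hlt.
Qed.

Lemma sech2_even s : sech2 (- s) = sech2 s.
Proof. unfold sech2, cosh. now rewrite Ropp_involutive, (Rplus_comm (exp (- s))). Qed.

Record profile (tau : R) (g g1 : R -> R) : Prop := {
  profile_deriv : forall s, dl g s (g1 s);
  profile_deriv2 : forall s, dl g1 s (force tau (g s));
  profile_range : forall s, 2 * tau <= g s <= 1 + 2 * tau;
  profile_energy : forall s, g1 s ^ 2 = 4 * (1 + 2 * tau - g s) * (g s ^ 2 - 4 * tau ^ 2)
}.
Arguments profile_deriv {tau g g1}.
Arguments profile_deriv2 {tau g g1}.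
Arguments profile_range {tau g g1}.
Arguments profile_energy {tau g g1}.

Lemma profile_shift tau g g1 c : profile tau g g1 ->
  profile tau (fun s => g (s + c)) (fun s => g1 (s + c)).
Proof.
  intros Hg; split; intros s.
  - apply dl_shift, (profile_deriv Hg).
  - apply dl_shift, (profile_deriv2 Hg).
  - apply (profile_range Hg).
  - apply (profile_energy Hg).
Qed.

Lemma profile_reflect tau g g1 : profile tau g g1 ->
  profile tau (fun s => g (- s)) (fun s => - g1 (- s)).
Proof.
  intros Hg; split; intros s.
  - apply dl_reflect, (profile_deriv Hg).
  - eapply dl_eq; [|apply dl_opp, dl_reflect, (profile_deriv2 Hg)]. ring.
  - apply (profile_range Hg).
  - rewrite <- (profile_energy Hg). ring.
Qed.

Lemma profile_deriv_top tau g g1 m : profile tau g g1 -> g m = 1 + 2 * tau -> g1 m = 0.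
Proof.
  intros Hg Hm. pose proof (profile_energy Hg m) as He. rewrite Hm in He.
  destruct (Req_dec (g1 m) 0) as [H0|Hne]; [exact H0|].
  exfalso. apply (pow_nonzero _ 2 Hne). rewrite He. ring.
Qed.

Lemma linear_gronwall (E E1 : R -> R) a b : 0 < a -> (forall x, dl E x (E1 x)) ->
  (forall x, E1 x <= a * E x + b) ->
  forall s, 0 <= s -> E s + b / a <= (E 0 + b / a) * exp (a * s).
Proof.
  intros Ha HE HE1 s Hs.
  set (F := fun x => (E x + b / a) * exp (- (a * x))).
  assert (HF : forall x, dl F x ((E1 x - a * E x - b) * exp (- (a * x)))).
  { intros x. eapply dl_eq.
    2: { apply dl_mult; [apply dl_plus; [apply HE | apply dl_const]|].
         apply (dl_comp (fun y => - (a * y)) exp); [|apply derivable_pt_lim_exp].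
         apply dl_opp, dl_mult; [apply dl_const | apply dl_id]. }
    cbv beta. field; lra. }
  assert (HFs : F s <= F 0).
  { destruct (Req_dec s 0) as [Hs0|Hne]; [rewrite Hs0; right; reflexivity|].
    destruct (MVT_cor2 F _ 0 s ltac:(lra) (fun x _ => HF x)) as [z [Hz _]].
    assert ((E1 z - a * E z - b) * exp (- (a * z)) <= 0).
    { rewrite <- (Rmult_0_l (exp (- (a * z)))).
      apply Rmult_le_compat_r; [left; apply exp_pos | specialize (HE1 z); lra]. }
    nra. }
  unfold F in HFs. rewrite Rmult_0_r, Ropp_0, exp_0, Rmult_1_r in HFs.
  assert (Hee : exp (- (a * s)) * exp (a * s) = 1)
    by (rewrite <- exp_plus, Rplus_opp_l; apply exp_0).
  pose proof (exp_pos (a * s)).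
  replace (E s + b / a) with ((E s + b / a) * exp (- (a * s)) * exp (a * s))
    by (rewrite Rmult_assoc, Hee; ring).
  apply Rmult_le_compat_r; lra.
Qed.

(* The energy [e^2 + f^2] of the differences [e = x - y], [f = v - w] between a
   profile and [sech2] grows at rate at most 24, up to an O(tau^2) source. *)
Lemma energy_rate_bound tau x y v w : 0 < tau <= 1 / 2 -> 2 * tau <= x <= 1 + 2 * tau ->
  0 < y <= 1 ->
  2 * (x - y) * (v - w) + 2 * (v - w) * (force tau x - force 0 y)
    <= 24 * ((x - y) ^ 2 + (v - w) ^ 2) + 400 * tau ^ 2.
Proof.
  intros Htau Hx Hy. set (e := x - y). set (f := v - w). set (k := 5 - 6 * (x + y)).
  replace (2 * e * f + 2 * f * (force tau x - force 0 y))
    with (2 * e * f * k + 16 * tau * f * (x + tau)) by (unfold e, k, force; ring).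
  assert (0 <= (13 - k) * (e + f) ^ 2) by (apply Rmult_le_pos; [unfold k; lra | apply pow2_ge_0]).
  assert (0 <= (13 + k) * (e - f) ^ 2) by (apply Rmult_le_pos; [unfold k; lra | apply pow2_ge_0]).
  assert (0 <= (f - 8 * tau * (x + tau)) ^ 2) by apply pow2_ge_0.
  assert (tau ^ 2 * (x + tau) ^ 2 <= tau ^ 2 * (25 / 4))
    by (apply Rmult_le_compat_l; [apply pow2_ge_0 | nra]).
  nra.
Qed.

Lemma profile_close_sech2_right tau g g1 s : 0 < tau <= 1 / 2 -> profile tau g g1 ->
  g 0 = 1 + 2 * tau -> 0 <= s -> Rabs (g s - sech2 s) <= 5 * tau * exp (12 * s).
Proof.
  intros Htau Hg Htop Hs.
  pose proof (profile_deriv_top tau g g1 0 Hg Htop) as Hg1.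
  set (E := fun x => (g x - sech2 x) ^ 2 + (g1 x - sech2' x) ^ 2).
  set (E1 := fun x => 2 * (g x - sech2 x) * (g1 x - sech2' x)
                      + 2 * (g1 x - sech2' x) * (force tau (g x) - force 0 (sech2 x))).
  assert (HdE : forall x, dl E x (E1 x)).
  { intros x. eapply dl_eq; [|apply dl_plus; apply dl_pow; apply dl_minus].
    2, 4: apply (profile_deriv Hg) || apply (profile_deriv2 Hg).
    2: apply sech2_derivative.
    2: apply sech2'_derivative.
    unfold E1; simpl; ring. }
  assert (HE1 : forall x, E1 x <= 24 * E x + 400 * tau ^ 2).
  { intros x.
    apply energy_rate_bound; [exact Htau | apply (profile_range Hg) | apply sech2_bounds]. }
  assert (HE0 : E 0 = 4 * tau ^ 2) by (unfold E; rewrite Htop, Hg1, sech2_0, sech2'_0; ring).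
  pose proof (linear_gronwall E E1 24 (400 * tau ^ 2) ltac:(lra) HdE HE1 s Hs) as Hgr.
  rewrite HE0 in Hgr.
  assert (Hexp : exp (24 * s) = exp (12 * s) ^ 2)
    by (replace (24 * s) with (12 * s + 12 * s) by ring; rewrite exp_plus; ring).
  pose proof (exp_pos (12 * s)).
  assert (0 <= tau ^ 2 * exp (24 * s)) by (rewrite Hexp; nra).
  apply Rle_trans with (Rabs (5 * tau * exp (12 * s))).
  - apply Rsqr_le_abs_0. unfold Rsqr. pose proof (pow2_ge_0 (g1 s - sech2' s)).
    unfold E in Hgr. rewrite Hexp in *. nra.
  - right; apply Rabs_pos_eq. nra.
Qed.

Lemma profile_close_sech2 tau g g1 m s : 0 < tau <= 1 / 2 -> profile tau g g1 ->
  g m = 1 + 2 * tau -> Rabs (g s - sech2 (s - m)) <= 5 * tau * exp (12 * Rabs (s - m)).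
Proof.
  intros Htau Hg Htop. destruct (Rle_or_lt 0 (s - m)) as [Hsm|Hsm].
  - rewrite (Rabs_pos_eq (s - m)) by exact Hsm.
    pose proof (profile_close_sech2_right tau _ _ (s - m) Htau (profile_shift tau g g1 m Hg))
      as Hcl; cbv beta in Hcl. rewrite Rplus_0_l in Hcl.
    replace (s - m + m) with s in Hcl by ring. now apply Hcl.
  - rewrite (Rabs_left (s - m)) by exact Hsm.
    pose proof (profile_close_sech2_right tau _ _ (- (s - m)) Htau
                  (profile_reflect tau _ _ (profile_shift tau g g1 m Hg))) as Hcl; cbv beta in Hcl.
    rewrite sech2_even in Hcl. replace (- - (s - m) + m) with s in Hcl by ring.
    replace (- 0 + m) with m in Hcl by ring. apply Hcl; [exact Htop | lra].
Qed.

Lemma profile_close_sech2_shifted tau g g1 m l s : 0 < tau <= 1 / 2 -> profile tau g g1 ->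
  g m = 1 + 2 * tau ->
  Rabs (g s - sech2 (s - l)) <= 5 * tau * exp (12 * Rabs (s - m)) + 2 * Rabs (m - l).
Proof.
  intros Htau Hg Htop.
  pose proof (profile_close_sech2 tau g g1 m s Htau Hg Htop).
  pose proof (sech2_lipschitz (s - m) (s - l)) as Hlip.
  replace (s - m - (s - l)) with (- (m - l)) in Hlip by ring. rewrite Rabs_Ropp in Hlip.
  pose proof (Rabs_triang (g s - sech2 (s - m)) (sech2 (s - m) - sech2 (s - l))).
  replace (g s - sech2 (s - m) + (sech2 (s - m) - sech2 (s - l))) with (g s - sech2 (s - l))
    in * by ring.
  lra.
Qed.

Lemma profile_deriv_lt tau g g1 x : 0 < tau <= 1 / 320 -> profile tau g g1 -> g1 x < 5 / 2.
Proof.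
  intros Htau Hg. pose proof (profile_energy Hg x) as He. pose proof (profile_range Hg x).
  assert (g1 x ^ 2 < 25 / 4); [|nra].
  rewrite He.
  assert (0 <= g x ^ 2 - 4 * tau ^ 2 <= (1 + 2 * tau) ^ 2) by nra.
  assert ((1 + 2 * tau - g x) * (g x ^ 2 - 4 * tau ^ 2) <= (1 + 2 * tau) * (1 + 2 * tau) ^ 2)
    by (apply Rmult_le_compat; lra).
  nra.
Qed.

Lemma force_le_high tau x : 0 < tau <= 1 / 320 -> 3 / 4 <= x <= 1 + 2 * tau ->
  force tau x <= - 1 / 4.
Proof.
  intros Htau Hx. unfold force.
  assert (0 <= (x - 3 / 4) * (x + 1 / 12)) by (apply Rmult_le_pos; lra).
  assert (0 <= tau * (1 + 2 * tau - x)) by (apply Rmult_le_pos; lra).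
  nra.
Qed.

Lemma profile_deriv_pos tau g g1 s L : 0 < tau -> profile tau g g1 -> 2 * tau < g s ->
  0 <= g1 s -> (forall x, s <= x <= s + L -> g x < 1 + 2 * tau) ->
  forall x, s <= x <= s + L -> 0 < g1 x.
Proof.
  intros Htau Hg Hgs Hg1s Hbelow_top.
  assert (Hg1_ne : forall x, s <= x <= s + L -> 2 * tau < g x -> g1 x <> 0).
  { intros x Hx Hgx H0. pose proof (profile_energy Hg x) as He. rewrite H0 in He.
    specialize (Hbelow_top x Hx).
    assert (0 < (1 + 2 * tau - g x) * (g x ^ 2 - 4 * tau ^ 2)) by (apply Rmult_lt_0_compat; nra).
    nra. }
  assert (Hcont : forall x, continuity_pt g1 x)
    by (intros x; apply (dl_continuity_pt _ _ _ (profile_deriv2 Hg x))).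
  intros x Hx.
  enough (Hind : forall y, s <= y -> y <= s + L -> 0 < g1 y) by (apply Hind; lra).
  apply (real_induction (fun y => y <= s + L -> 0 < g1 y) s). intros y Hy Hprev.
  destruct (Rlt_or_le (s + L) y) as [Hfar|Hnear].
  { exists 1; split; [lra|]. intros z Hz Hzl. apply Hprev; lra. }
  assert (Hgy : 2 * tau < g y).
  { apply Rlt_le_trans with (g s); [exact Hgs|].
    apply (incr_of_dl_pos g g1); [apply (profile_deriv Hg) | intros z Hz; apply Hprev; lra | lra]. }
  assert (Hg1y : 0 <= g1 y).
  { destruct (Req_dec y s) as [->|Hne]; [exact Hg1s|].
    apply Ropp_le_cancel. rewrite Ropp_0.
    apply (continuity_pt_le_left (fun z => - g1 z) s y); [apply continuity_pt_opp, Hcont | lra |].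
    intros z Hz. pose proof (Hprev z ltac:(lra) ltac:(lra)). lra. }
  assert (Hpos : 0 < g1 y).
  { destruct Hg1y as [Hlt|Heq]; [exact Hlt|].
    exfalso. apply (Hg1_ne y); [lra | exact Hgy | now symmetry]. }
  destruct (continuity_pt_pos_nbhd g1 y (Hcont y) Hpos) as [d [Hd Hnbhd]].
  exists d; split; [exact Hd|]. intros z Hz Hzl.
  destruct (Rlt_or_le z y); [apply Hprev; lra | apply Hnbhd, Rabs_def1; lra].
Qed.

Lemma profile_reaches_three_quarters tau g g1 d s : 0 < d <= 1 / 2 -> 0 < tau <= d / 160 ->
  profile tau g g1 -> d <= g s -> (forall x, s <= x <= s + 2 / d -> 0 < g1 x) ->
  exists p, s <= p <= s + 2 / d /\ 3 / 4 <= g p.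
Proof.
  intros Hd Htau Hg Hgs Hpos. assert (H2d : 0 < 2 / d) by (apply Rdiv_lt_0_compat; lra).
  apply NNPP; intro Hnone.
  assert (Hlow : forall p, s <= p <= s + 2 / d -> g p < 3 / 4).
  { intros p Hp. apply Rnot_le_lt; intro Hhigh. apply Hnone; exists p; split; assumption. }
  assert (Hfast : forall p, s <= p <= s + 2 / d -> d / 2 <= g1 p).
  { intros p Hp. specialize (Hlow p Hp). pose proof (Hpos p Hp) as Hg1p.
    assert (Hgp : d <= g p).
    { apply Rle_trans with (g s); [exact Hgs|].
      apply (incr_of_dl_pos g g1); [apply (profile_deriv Hg) | intros z Hz; apply Hpos; lra | lra].
    }
    assert (Hsq : d ^ 2 / 4 <= g1 p ^ 2).
    { rewrite (profile_energy Hg p).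
      assert (d ^ 2 / 2 <= g p ^ 2 - 4 * tau ^ 2) by nra.
      assert (1 / 4 <= 1 + 2 * tau - g p) by lra.
      nra. }
    nra. }
  destruct (MVT_cor2 g g1 s (s + 2 / d) ltac:(lra) (fun c _ => profile_deriv Hg c))
    as [z [Hz Hzs]].
  specialize (Hfast z ltac:(lra)). specialize (Hlow (s + 2 / d) ltac:(lra)).
  replace (s + 2 / d - s) with (2 / d) in Hz by ring.
  assert (d / 2 * (2 / d) = 1) by (field; lra).
  assert (d / 2 * (2 / d) <= g1 z * (2 / d)) by (apply Rmult_le_compat_r; lra).
  lra.
Qed.

Lemma profile_climbs tau g g1 d s : 0 < d <= 1 / 2 -> 0 < tau <= d / 160 -> profile tau g g1 ->
  d <= g s -> 0 <= g1 s -> exists m, s <= m <= s + (2 / d + 10) /\ g m = 1 + 2 * tau.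
Proof.
  intros Hd Htau Hg Hgs Hg1s. assert (H2d : 0 < 2 / d) by (apply Rdiv_lt_0_compat; lra).
  apply NNPP; intro Hno.
  assert (Hbelow_top : forall x, s <= x <= s + (2 / d + 10) -> g x < 1 + 2 * tau).
  { intros x Hx. destruct (profile_range Hg x) as [_ [Hlt|Heq]]; [exact Hlt|].
    exfalso; apply Hno; exists x; split; assumption. }
  pose proof (profile_deriv_pos tau g g1 s _ ltac:(lra) Hg ltac:(lra) Hg1s Hbelow_top) as Hpos.
  destruct (profile_reaches_three_quarters tau g g1 d s Hd Htau Hg Hgs
              (fun x Hx => Hpos x ltac:(lra))) as [p [Hp Hgp]].
  destruct (MVT_cor2 g1 (fun x => force tau (g x)) p (p + 10) ltac:(lra)
              (fun c _ => profile_deriv2 Hg c)) as [z [Hz Hzp]].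
  assert (Hforce : force tau (g z) <= - 1 / 4).
  { apply force_le_high; [lra|]. split; [|apply (profile_range Hg)].
    apply Rle_trans with (g p); [exact Hgp|].
    apply (incr_of_dl_pos g g1); [apply (profile_deriv Hg) | intros y Hy; apply Hpos; lra | lra]. }
  pose proof (profile_deriv_lt tau g g1 p ltac:(lra) Hg).
  pose proof (Hpos (p + 10) ltac:(lra)).
  replace (p + 10 - p) with 10 in Hz by ring. lra.
Qed.

Lemma profile_top_near tau g g1 d s : 0 < d <= 1 / 2 -> 0 < tau <= d / 160 ->
  profile tau g g1 -> d <= g s -> exists m, Rabs (m - s) <= 2 / d + 10 /\ g m = 1 + 2 * tau.
Proof.
  intros Hd Htau Hg Hgs. destruct (Rle_or_lt 0 (g1 s)) as [Hup|Hdown].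
  - destruct (profile_climbs tau g g1 d s Hd Htau Hg Hgs Hup) as [m [Hm Htop]].
    exists m; split; [apply Rabs_le; lra | exact Htop].
  - destruct (profile_climbs tau _ _ d (- s) Hd Htau (profile_reflect tau g g1 Hg))
      as [m [Hm Htop]]; cbv beta; rewrite ?Ropp_involutive; [exact Hgs | lra |].
    exists (- m); split; [apply Rabs_le; lra | exact Htop].
Qed.

Lemma const_of_dl_zero (p p1 : R -> R) a b : a <= b -> (forall x, dl p x (p1 x)) ->
  (forall z, a < z < b -> p1 z = 0) -> p b = p a.
Proof.
  intros Hab Hp Hzero. destruct (Req_dec a b) as [->|Hne]; [reflexivity|].
  destruct (MVT_cor2 p p1 a b ltac:(lra) (fun c _ => Hp c)) as [c [Hc Hcab]].
  rewrite Hzero in Hc by exact Hcab. lra.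
Qed.

Lemma dl_of_locally_zero (p1 : R -> R) l y a b : a < y < b ->
  (forall z, a < z < b -> p1 z = 0) -> dl p1 y l -> l = 0.
Proof.
  intros Hy Hzero Hd.
  apply (uniqueness_limite (fun _ => 0) y); [|apply dl_const].
  apply (derivable_pt_lim_locally_ext p1 _ y a b); [exact Hy | exact Hzero | exact Hd].
Qed.

Lemma periodic_INR (p : R -> R) T : (forall x, p (x + T) = p x) ->
  forall k x, p (x + INR k * T) = p x.
Proof.
  intros HT k. induction k as [|k IH]; intros x.
  - simpl. f_equal. ring.
  - rewrite S_INR. replace (x + (INR k + 1) * T) with (x + INR k * T + T) by ring.
    rewrite HT. apply IH.
Qed.

(* If [p' * (p'' - F p) = 0], then [p'' = F p] away from the flat pieces of [p];
   starting from a point where [p'' <> F p], the flat piece would extend to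
   [+oo], which periodicity turns into constancy of [p]. *)
Lemma second_order_of_first_integral (p p1 p2 F : R -> R) :
  (forall x, dl p x (p1 x)) -> (forall x, dl p1 x (p2 x)) ->
  (forall x, continuity_pt p2 x) -> continuity F ->
  (forall x, p1 x * (p2 x - F (p x)) = 0) ->
  (exists T, 0 < T /\ forall x, p (x + T) = p x) -> (exists a b, p a <> p b) ->
  forall x, p2 x = F (p x).
Proof.
  intros Hp Hp1 Hp2c HF Hprod [T [HT Hper]] [a [b Hab]] s0.
  set (Q := fun x => p2 x - F (p x)).
  assert (HQc : forall x, continuity_pt Q x).
  { intros x. apply continuity_pt_minus; [apply Hp2c|].
    apply (continuity_pt_comp p F); [apply (dl_continuity_pt _ _ _ (Hp x)) | apply HF]. }
  apply NNPP; intro Hs0.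
  assert (HQs0 : Q s0 <> 0) by (unfold Q; intro H0; apply Hs0; lra).
  assert (Hflat : forall x, Q x <> 0 -> exists d, 0 < d /\ forall y, Rabs (y - x) < d -> p1 y = 0)
    by (intros x; apply (zero_near_of_mult_zero p1 Q x Hprod (HQc x))).
  assert (Hp2s0 : p2 s0 = 0).
  { destruct (Hflat s0 HQs0) as [d [Hd Hzero]].
    apply (dl_of_locally_zero p1 _ s0 (s0 - d) (s0 + d)); [lra | | apply Hp1].
    intros z Hz; apply Hzero, Rabs_def1; lra. }
  assert (Hzero : forall y, s0 <= y -> p1 y = 0).
  { apply real_induction. intros x Hx Hbelow.
    assert (HQx : Q x <> 0).
    { destruct (Req_dec x s0) as [->|Hne]; [exact HQs0|].
      assert (HQconst : forall y, s0 < y < x -> Q y = Q s0).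
      { intros y Hy.
        assert (Hp2y : p2 y = 0).
        { apply (dl_of_locally_zero p1 _ y s0 x); [lra | | apply Hp1].
          intros z Hz; apply Hbelow; lra. }
        assert (Hpy : p y = p s0).
        { apply (const_of_dl_zero p p1); [lra | exact Hp | intros z Hz; apply Hbelow; lra]. }
        unfold Q. now rewrite Hp2y, Hpy, Hp2s0. }
      replace (Q x) with (Q s0); [exact HQs0|].
      apply Rle_antisym.
      - apply Ropp_le_cancel, (continuity_pt_le_left (fun y => - Q y) s0 x); [|lra|].
        + apply continuity_pt_opp, HQc.
        + intros y Hy; rewrite HQconst by exact Hy; lra.
      - apply (continuity_pt_le_left Q s0 x); [apply HQc | lra |].
        intros y Hy; rewrite HQconst by exact Hy; lra. }
    destruct (Hflat x HQx) as [d [Hd Hzero]]. exists d; split; [exact Hd|].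
    intros y Hy. destruct (Rlt_or_le y x); [apply Hbelow; lra | apply Hzero, Rabs_def1; lra]. }
  assert (Hconst : forall x, p x = p s0).
  { intros x. destruct (INR_archimed T (s0 - x) HT) as [k Hk].
    rewrite <- (periodic_INR p T Hper k x).
    apply (const_of_dl_zero p p1); [lra | exact Hp |]. intros z Hz; apply Hzero; lra. }
  apply Hab. now rewrite (Hconst a), (Hconst b).
Qed.

Lemma is_phi_ode tau phi : is_phi tau phi ->
  exists p1 p2 : R -> R,
    (forall x, dl phi x (p1 x)) /\ (forall x, dl p1 x (p2 x)) /\
    (forall x, p1 x ^ 2 + (phi x ^ 2 - tau) ^ 2 = phi x ^ 2) /\
    (forall x, p2 x = phi x * (1 + 2 * tau - 2 * phi x ^ 2)).
Proof.
  intros [D [[HD0 HDd] [Hfi [Hper [Hnc _]]]]].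
  assert (Hp : forall x, dl phi x (D 1%nat x)) by (intros x; rewrite <- HD0; apply HDd).
  exists (D 1%nat), (D 2%nat). split; [exact Hp|]. split; [intros x; apply HDd|].
  split; [exact Hfi|].
  apply (second_order_of_first_integral phi (D 1%nat) (D 2%nat)
           (fun x => x * (1 + 2 * tau - 2 * x ^ 2)));
    [exact Hp | intros x; apply HDd | intros x; apply (dl_continuity_pt _ _ _ (HDd 2%nat x))
    | reg | | exact Hper | exact Hnc].
  intros x.
  assert (Hd : dl (fun y => D 1%nat y ^ 2 + (phi y ^ 2 - tau) ^ 2 - phi y ^ 2) x
                 (2 * (D 1%nat x * (D 2%nat x - phi x * (1 + 2 * tau - 2 * phi x ^ 2))))).
  { eapply dl_eq; [|apply dl_minus; [apply dl_plus; apply dl_pow|apply dl_pow; apply Hp]].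
    2: apply HDd.
    2: apply dl_minus; [apply dl_pow, Hp | apply dl_const].
    simpl; ring. }
  assert (Hd0 : dl (fun y => D 1%nat y ^ 2 + (phi y ^ 2 - tau) ^ 2 - phi y ^ 2) x 0).
  { apply (derivable_pt_lim_ext (fun _ => 0)); [intros z; rewrite Hfi; ring | apply dl_const]. }
  pose proof (uniqueness_limite _ _ _ _ Hd Hd0). lra.
Qed.

Lemma profile_of_ode tau phi p1 p2 : 0 < tau ->
  (forall x, dl phi x (p1 x)) -> (forall x, dl p1 x (p2 x)) ->
  (forall x, p1 x ^ 2 + (phi x ^ 2 - tau) ^ 2 = phi x ^ 2) ->
  (forall x, p2 x = phi x * (1 + 2 * tau - 2 * phi x ^ 2)) ->
  profile tau (fun s => phi s ^ 2 + tau ^ 2 / phi s ^ 2)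
              (fun s => 2 * p1 s * (phi s - tau ^ 2 / phi s ^ 3)).
Proof.
  intros Htau Hp Hp1 Hfi Hp2.
  assert (Hne : forall s, phi s <> 0).
  { intros s H0. pose proof (Hfi s) as Hs. rewrite H0 in Hs. pose proof (pow2_ge_0 (p1 s)).
    simpl in Hs. nra. }
  assert (Hsq : forall s, 0 < phi s ^ 2)
    by (intros s; rewrite <- Rsqr_pow2; apply Rsqr_pos_lt, Hne).
  assert (Hsplit : forall s, phi s ^ 2 + tau ^ 2 / phi s ^ 2
                             = 2 * tau + (phi s ^ 2 - tau) ^ 2 / phi s ^ 2)
    by (intros s; field; apply Hne).
  assert (Hdev : forall s, 0 <= (phi s ^ 2 - tau) ^ 2 / phi s ^ 2 <= 1).
  { intros s. specialize (Hsq s). pose proof (Hfi s). pose proof (pow2_ge_0 (p1 s)).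
    split.
    - apply Rmult_le_pos; [apply pow2_ge_0 | left; apply Rinv_0_lt_compat, Hsq].
    - apply Rmult_le_reg_r with (phi s ^ 2); [exact Hsq|].
      unfold Rdiv. rewrite Rmult_assoc, Rinv_l by lra. lra. }
  split; intros s.
  - eapply dl_eq; [|apply dl_plus; [apply dl_pow, Hp
                    | apply dl_div; [apply pow_nonzero, Hne | apply dl_const | apply dl_pow, Hp]]].
    simpl. field. apply Hne.
  - eapply dl_eq; [|apply dl_mult; [apply dl_mult; [apply dl_const | apply Hp1]
                    | apply dl_minus; [apply Hp | apply dl_div]]].
    2: apply pow_nonzero, Hne.
    2: apply dl_const.
    2: apply dl_pow, Hp.
    rewrite Hp2. unfold force. simpl. field_simplify_eq; [|apply Hne].
    replace (p1 s ^ 2) with (phi s ^ 2 - (phi s ^ 2 - tau) ^ 2) by (pose proof (Hfi s); lra).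
    ring.
  - rewrite Hsplit. pose proof (Hdev s). lra.
  - simpl. field_simplify_eq; [|apply Hne].
    replace (p1 s ^ 2) with (phi s ^ 2 - (phi s ^ 2 - tau) ^ 2) by (pose proof (Hfi s); lra).
    ring.
Qed.

Lemma xi_profile tau t phi : 0 < tau -> is_phi tau phi -> exists X1, profile tau (xi tau t phi) X1.
Proof.
  intros Htau Hphi. destruct (is_phi_ode tau phi Hphi) as [p1 [p2 [Hp [Hp1 [Hfi Hp2]]]]].
  eexists. exact (profile_shift tau _ _ (- t) (profile_of_ode tau phi p1 p2 Htau Hp Hp1 Hfi Hp2)).
Qed.

Lemma inv_INR_add_2_bounds k : 0 < / (INR k + 2) <= 1 / 2.
Proof.
  pose proof (pos_INR k). split; [apply Rinv_0_lt_compat; lra|].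
  unfold Rdiv; rewrite Rmult_1_l. apply Rinv_le_contravar; lra.
Qed.

Lemma subsequence_of_frequently (P : nat -> nat -> Prop) :
  (forall N k, exists n, (N <= n)%nat /\ P n k) ->
  exists sigma : nat -> nat, (forall k, (sigma k < sigma (S k))%nat) /\ forall k, P (sigma k) k.
Proof.
  intros HP.
  destruct (choice (fun Nk n => (fst Nk <= n)%nat /\ P n (snd Nk)) (fun Nk => HP (fst Nk) (snd Nk)))
    as [c Hc].
  exists (fix sigma k := match k with O => c (O, O) | S k' => c (S (sigma k'), k) end).
  split.
  - intros k. apply (Hc (_, _)).
  - intros [|k]; apply (Hc (_, _)).
Qed.

Section Convergence.

Variables (taus : nat -> R) (X : nat -> R -> R).
Hypothesis taus_pos : forall n, 0 < taus n.
Hypothesis taus_cv : Un_cv taus 0.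
Hypothesis X_profile : forall n, exists X1, profile (taus n) (X n) X1.

Definition tops_bounded_often : Prop :=
  exists B, forall N, exists n, (N <= n)%nat /\
    exists m, Rabs m <= B /\ X n m = 1 + 2 * taus n.

Lemma taus_eventually_lt e : 0 < e -> exists N, forall n, (N <= n)%nat -> taus n < e.
Proof.
  intros He. destruct (taus_cv e He) as [N HN]. exists N. intros n Hn.
  specialize (HN n Hn). unfold R_dist in HN. rewrite Rminus_0_r in HN.
  apply Rabs_def2 in HN. lra.
Qed.

Lemma cv_zero_of_not_tops_bounded : ~ tops_bounded_often -> cv_unif_compact X (fun _ => 0).
Proof.
  intros Hunb a b eps Heps.
  set (d := Rmin (eps / 2) (1 / 2)).
  assert (Hd : 0 < d <= 1 / 2) by (unfold d; split; [apply Rmin_pos; lra | apply Rmin_r]).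
  assert (Hde : d <= eps / 2) by apply Rmin_l.
  set (B := Rabs a + Rabs b + (2 / d + 10)).
  assert (Hnotop : exists N, forall n, (N <= n)%nat ->
                     forall m, Rabs m <= B -> X n m <> 1 + 2 * taus n).
  { apply NNPP; intro Hn. apply Hunb. exists B. intros N. apply NNPP; intro HN. apply Hn. exists N.
    intros n Hn' m Hm Htop. apply HN. exists n; split; [exact Hn'|]. exists m; split; assumption. }
  destruct Hnotop as [N1 HN1].
  destruct (taus_eventually_lt (d / 160) ltac:(lra)) as [N2 HN2].
  exists (Nat.max N1 N2). intros n Hn s Hs.
  destruct (X_profile n) as [X1 HX1].
  assert (Hlow : X n s < d).
  { apply Rnot_le_lt; intro Hhigh.
    destruct (profile_top_near (taus n) (X n) X1 d s Hd
                (conj (taus_pos n) (Rlt_le _ _ (HN2 n ltac:(lia)))) HX1 Hhigh) as [m [Hm Htop]].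
    apply (HN1 n ltac:(lia) m); [|exact Htop].
    apply Rabs_le_between in Hm. pose proof (Rabs_le_between a _ (Rle_refl _)).
    pose proof (Rabs_le_between b _ (Rle_refl _)). unfold B. apply Rabs_le; lra. }
  pose proof (profile_range HX1 s). pose proof (taus_pos n).
  rewrite Rminus_0_r, Rabs_pos_eq by lra. lra.
Qed.

Lemma tops_converge_along_subsequence : tops_bounded_often ->
  exists (sigma : nat -> nat) (l : R), (forall k, (sigma k < sigma (S k))%nat) /\
    forall k, taus (sigma k) < / (INR k + 2) /\
      exists m, Rabs (m - l) < / (INR k + 2) /\ X (sigma k) m = 1 + 2 * taus (sigma k).
Proof.
  intros [B HB].
  destruct (choice (fun N q => (N <= fst q)%nat /\ Rabs (snd q) <= B /\
                               X (fst q) (snd q) = 1 + 2 * taus (fst q)))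
    as [q Hq].
  { intros N. destruct (HB N) as [n [Hn [m Hm]]]. exists (n, m). split; assumption. }
  destruct (Bolzano_Weierstrass (fun N => snd (q N)) (fun c => - B <= c <= B) (compact_P3 (- B) B))
    as [l Hl].
  { intros N. apply Rabs_le_between, (Hq N). }
  destruct (subsequence_of_frequently (fun n k => taus n < / (INR k + 2) /\
              exists m, Rabs (m - l) < / (INR k + 2) /\ X n m = 1 + 2 * taus n))
    as [sigma [Hincr Hsigma]].
  - intros N k. destruct (inv_INR_add_2_bounds k) as [Hrk _].
    destruct (taus_eventually_lt _ Hrk) as [N0 HN0].
    destruct (Hl (disc l (mkposreal _ Hrk)) (Nat.max N N0)) as [p [Hp Hpl]].
    { exists (mkposreal _ Hrk). intros y Hy; exact Hy. }
    destruct (Hq p) as [Hqp [_ Htop]].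
    exists (fst (q p)); split; [lia|]. split; [apply HN0; lia|].
    exists (snd (q p)); split; [exact Hpl | exact Htop].
  - exists sigma, l. split; [exact Hincr | exact Hsigma].
Qed.

Lemma cv_sech2_of_tops_bounded : tops_bounded_often ->
  exists sigma : nat -> nat, (forall k, (sigma k < sigma (S k))%nat) /\
    exists s0, cv_unif_compact (fun k => X (sigma k)) (fun s => sech2 (s - s0)).
Proof.
  intros Hbdd. destruct (tops_converge_along_subsequence Hbdd) as [sigma [l [Hincr Hsigma]]].
  exists sigma; split; [exact Hincr|]. exists l.
  intros a b eps Heps.
  set (K := exp (12 * (Rabs a + Rabs b + Rabs l + 1))).
  assert (HK : 0 < K) by apply exp_pos.
  destruct (archimed_cor1 (eps / (5 * K + 2))) as [k0 [Hk0 Hk0pos]];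
    [apply Rdiv_lt_0_compat; lra|].
  exists k0. intros k Hk s Hs.
  set (r := / (INR k + 2)). destruct (inv_INR_add_2_bounds k) as [Hr Hr2]. fold r in Hr, Hr2.
  destruct (Hsigma k) as [Htau [m [Hm Htop]]]. fold r in Htau, Hm.
  destruct (X_profile (sigma k)) as [X1 HX1]. pose proof (taus_pos (sigma k)).
  assert (Hreps : r * (5 * K + 2) < eps).
  { assert (r <= / INR k0).
    { apply Rinv_le_contravar; [apply lt_0_INR; lia|]. pose proof (le_INR _ _ Hk). lra. }
    apply (Rmult_lt_compat_r (5 * K + 2)) in Hk0; [|lra].
    unfold Rdiv in Hk0. rewrite Rmult_assoc, Rinv_l in Hk0 by lra. nra. }
  assert (Hexp : exp (12 * Rabs (s - m)) <= K).
  { unfold K. destruct (Req_dec (Rabs (s - m)) (Rabs a + Rabs b + Rabs l + 1)) as [Heq|Hne];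
      [rewrite Heq; lra | left; apply exp_increasing].
    apply Rabs_def2 in Hm. pose proof (Rabs_le_between a _ (Rle_refl _)).
    pose proof (Rabs_le_between b _ (Rle_refl _)). pose proof (Rabs_le_between l _ (Rle_refl _)).
    assert (Rabs (s - m) <= Rabs a + Rabs b + Rabs l + 1) by (apply Rabs_le; lra). lra. }
  assert (taus (sigma k) * exp (12 * Rabs (s - m)) <= r * K)
    by (apply Rmult_le_compat; [lra | left; apply exp_pos | lra | exact Hexp]).
  pose proof (profile_close_sech2_shifted (taus (sigma k)) (X (sigma k)) X1 m l s
                ltac:(lra) HX1 Htop).
  lra.
Qed.

End Convergence.

Theorem lemma4p4 :
  forall (phi : R -> R -> R) (t : R -> R),
    (forall tau, 0 < tau -> is_phi tau (phi tau)) ->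
    forall taun : nat -> R,
      (forall n, 0 < taun n) -> Un_cv taun 0 ->
      exists sigma : nat -> nat,
        (forall k, (sigma k < sigma (S k))%nat) /\
        ((exists s0 : R,
            cv_unif_compact
              (fun k s => xi (taun (sigma k)) (t (taun (sigma k))) (phi (taun (sigma k))) s)
              (fun s => / (cosh (s - s0)) ^ 2))
         \/
         cv_unif_compact
           (fun k s => xi (taun (sigma k)) (t (taun (sigma k))) (phi (taun (sigma k))) s)
           (fun _ => 0)).
Proof.
  intros phi t Hphi taun Hpos Hcv.
  set (X := fun n => xi (taun n) (t (taun n)) (phi (taun n))).
  assert (HX : forall n, exists X1, profile (taun n) (X n) X1)
    by (intros n; apply xi_profile; [apply Hpos | apply Hphi, Hpos]).
  destruct (classic (tops_bounded_often taun X)) as [Hbdd|Hunb].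
  - destruct (cv_sech2_of_tops_bounded taun X Hpos Hcv HX Hbdd) as [sigma [Hincr [s0 Hcv0]]].
    exists sigma; split; [exact Hincr|]. left; exists s0. exact Hcv0.
  - exists (fun k => k); split; [intros k; lia|]. right.
    exact (cv_zero_of_not_tops_bounded taun X Hpos Hcv HX Hunb).
Qed.
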